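(* Fix positive constants $r$, $C_{\chi^2}$, $C_{\mathsf{TV}}$, $C_{8\to2}$ and $B$, and suppose $\mathscr F_\star$ is $B$-bounded. Suppose the process $\{X_t\}$ has a stationary distribution $\pi$, that its marginals $\{\mu_t\}$ are absolutely continuous w.r.t. $\pi$, and that $$\sup_{t\in\mathbb N}\chi^2(\mu_t,\pi)\le C_{\chi^2},\qquad \frac1T\sum_{t=0}^{T-1}\|\mu_t-\pi\|_{\mathsf{TV}}\le C_{\mathsf{TV}}r^2.$$ Suppose also that $\mathbb{E}_{\pi}\|f(X)\|_2^8\le C_{8\to2}(\mathbb{E}_\pi\|f(X)\|_2^2)^4$ for all $f\in\mathscr F_\star$. Then $(\partial B(r),\mathsf P_X)$ satisfies the trajectory $(C,2)$-hypercontractivity condition with $C=(1+\sqrt{C_{\chi^2}})\sqrt{C_{8\to2}}(1+C_{\mathsf{TV}}B^2)^2$.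
   Context: $\{X_t\}_{t\ge0}$ is a process in $\mathsf X\subset\mathbb R^{d_x}$ with marginals $X_t\sim\mu_t$; $\mathsf P_X$ is the joint law of $X_{0:T-1}$. $\mathscr F_\star$ is a class of functions $\mathsf X\to\mathbb R^{d_y}$; $B$-bounded means $\sup_x\|f(x)\|_2\le B$ for all $f\in\mathscr F_\star$. $\|f\|_{L^2}^2=\frac1T\sum_{t=0}^{T-1}\mathbb{E}\|f(X_t)\|_2^2$, $\partial B(r)=\{f\in\mathscr F_\star:\|f\|_{L^2}=r\}$. $\chi^2(\mu,\nu)=\mathbb{E}_\nu[(\frac{d\mu}{d\nu}-1)^2]$ for $\mu\ll\nu$; $\|\mu-\nu\|_{\mathsf{TV}}=\sup_A|\mu(A)-\nu(A)|$. Trajectory $(C,\alpha)$-hypercontractivity of $(\mathscr G,\mathsf P_X)$: $\mathbb{E}[\frac1T\sum_t\|f(X_t)\|_2^4]\le C(\mathbb{E}[\frac1T\sum_t\|f(X_t)\|_2^2])^\alpha$ for all $f\in\mathscr G$. *)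

From HB Require Import structures.
From mathcomp Require Import all_boot all_order all_algebra.
From mathcomp Require Import all_classical all_reals all_analysis.
Set Implicit Arguments. Unset Strict Implicit. Unset Printing Implicit Defensive.
Import Order.TTheory GRing.Theory Num.Theory.
Import numFieldNormedType.Exports.
Local Open Scope classical_set_scope.
Local Open Scope ring_scope.

Definition norm2 {R : realType} {dy : nat} (v : 'rV[R]_dy) : R :=
  Num.sqrt (\sum_(i < dy) v ord0 i ^+ 2).

Definition chi2 {d} {S : measurableType d} {R : realType}
  (mu nu : probability S R) : \bar R :=
  (\int[nu]_x (Radon_Nikodym (charge_of_finite_measure mu) nu x - 1%:E) ^+ 2)%E.

Definition tv {d} {S : measurableType d} {R : realType}
  (mu nu : probability S R) : \bar R :=
  ereal_sup [set `|(mu A - nu A)%E|%E | A in measurable].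

Definition L2sq {dO dS} {Omega : measurableType dO} {S : measurableType dS}
  {R : realType} {dy : nat} (P : probability Omega R) (X : nat -> Omega -> S)
  (T : nat) (f : S -> 'rV[R]_dy) : \bar R :=
  ((T%:R^-1)%:E * \sum_(t < T) \int[P]_w ((norm2 (f (X t w))) ^+ 2)%:E)%E.

Definition L2norm {dO dS} {Omega : measurableType dO} {S : measurableType dS}
  {R : realType} {dy : nat} (P : probability Omega R) (X : nat -> Omega -> S)
  (T : nat) (f : S -> 'rV[R]_dy) : R :=
  Num.sqrt (fine (L2sq P X T f)).

Definition sphere {dO dS} {Omega : measurableType dO} {S : measurableType dS}
  {R : realType} {dy : nat} (P : probability Omega R) (X : nat -> Omega -> S)
  (T : nat) (F : set (S -> 'rV[R]_dy)) (r : R) : set (S -> 'rV[R]_dy) :=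
  [set f | F f /\ L2norm P X T f = r].

(* trajectory (C, alpha)-hypercontractivity of (G, P_X), with P_X the law of
   X_{0:T-1} on the underlying probability space P *)
Definition traj_hypercontractive {dO dS} {Omega : measurableType dO}
  {S : measurableType dS} {R : realType} {dy : nat}
  (G : set (S -> 'rV[R]_dy)) (P : probability Omega R) (X : nat -> Omega -> S)
  (T : nat) (C alpha : R) : Prop :=
  forall f, G f ->
    (\int[P]_w ((T%:R^-1 * \sum_(t < T) norm2 (f (X t w)) ^+ 4)%:E)
     <= C%:E * poweR (\int[P]_w ((T%:R^-1 * \sum_(t < T) norm2 (f (X t w)) ^+ 2)%:E)) alpha)%E.

From HB Require Import structures.
From mathcomp Require Import all_boot all_order all_algebra.
From mathcomp Require Import all_classical all_reals all_analysis.
From mathcomp Require Import ring lra measurable_realfun.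
Set Implicit Arguments. Unset Strict Implicit. Unset Printing Implicit Defensive.
Import Order.TTheory GRing.Theory Num.Theory.
Import numFieldNormedType.Exports.
Local Open Scope classical_set_scope.
Local Open Scope ring_scope.

(* Let a = |f|^2, let g_t be the density of mu_t = law(X_t) with respect to pi,
   and p_k = E_pi[a^k].  Pointwise AM-GM,
     a^2 g_t = a^2 + a^2 (g_t - 1) <= (1/l + l a^4)/2 + (l' a^4 + (g_t - 1)^2/l')/2,
   integrated against pi and optimised over l, l' > 0, gives
     E_mu_t[a^2] <= (1 + sqrt chi2(mu_t, pi)) sqrt p_4 <= (1 + sqrt C_chi2) sqrt C_82 p_1^2.
   On the other hand a <= a g_t + B^2 (1 - g_t)^+ and int (1 - g_t)^+ dpi <= TV(mu_t, pi),
   so E_pi[a] <= E_mu_t[a] + B^2 TV(mu_t, pi); averaging over t and using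
   (1/T) sum_t E_mu_t[a] = |f|_L2^2 = r^2 gives p_1 <= (1 + C_TV B^2) r^2.  Averaging
   the first bound over t then yields the fourth-moment bound C r^4. *)

Lemma mulr_le_amgm (R : realFieldType) (u w l : R) : 0 < l ->
  u * w <= (l * u ^+ 2 + l^-1 * w ^+ 2) / 2.
Proof.
move=> l_gt0; rewrite -subr_ge0.
have -> : (l * u ^+ 2 + l^-1 * w ^+ 2) / 2 - u * w = (l * u - w) ^+ 2 / (2 * l).
  by field; rewrite lt0r_neq0.
by rewrite divr_ge0 ?sqr_ge0 // mulr_ge0 // ltW.
Qed.

Lemma le_amgm_family_inf (R : rcfType) (m q c K : R) :
  0 < c -> 0 <= K -> q <= K ^+ 2 ->
  (forall l1 l2, 0 < l1 -> 0 < l2 ->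
     m <= l1^-1 / 2 + (l1 + l2) / 2 * q + l2^-1 / 2 * c) ->
  m <= (1 + Num.sqrt c) * K.
Proof.
move=> c_gt0 K_ge0 qK amgm; set s := Num.sqrt c.
have s_gt0 : 0 < s by rewrite sqrtr_gt0.
apply/ler_addgt0Pr => e e_gt0.
(* [l1 = 1/L], [l2 = s/L] is optimal for [L = sqrt q]; we take [L] slightly
   above [K >= sqrt q] so that it is positive. *)
pose L := K + e / (1 + s).
have L_gt0 : 0 < L by rewrite ltr_wpDl // divr_gt0 // addr_gt0.
have qL : q <= L ^+ 2.
  apply: (le_trans qK); rewrite lerXn2r ?nnegrE ?(ltW L_gt0) //.
  by rewrite lerDl divr_ge0 // ltW // addr_gt0.
have q_term : (L^-1 + s / L) / 2 * q <= (1 + s) * L / 2.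
  have -> : (1 + s) * L / 2 = (L^-1 + s / L) / 2 * L ^+ 2 by field; rewrite lt0r_neq0.
  by rewrite ler_wpM2l // divr_ge0 // addr_ge0 ?invr_ge0 ?divr_ge0 // ltW.
have -> : (1 + s) * K + e = (1 + s) * L by rewrite /L; field; rewrite lt0r_neq0 // addr_gt0.
apply: (le_trans (amgm L^-1 (s / L) _ _)); rewrite ?invr_gt0 ?divr_gt0 //.
have -> : (s / L)^-1 / 2 * c = s * L / 2.
  by rewrite -(sqr_sqrtr (ltW c_gt0)) -/s; field; rewrite !lt0r_neq0.
rewrite invrK; lra.
Qed.

(* [fine] turns an infinite integral into [0]; [mean] is only used for bounded [h]. *)
Definition mean d (T : measurableType d) (R : realType)
  (mu : probability T R) (h : T -> R) : R := fine (\int[mu]_x (h x)%:E)%E.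

Section mean.
Context d (T : measurableType d) (R : realType) (mu : probability T R).

Lemma mean_ge0 (h : T -> R) : (forall x, 0 <= h x) -> 0 <= mean mu h.
Proof. by move=> h_ge0; apply/fine_ge0/integral_ge0 => x _; rewrite lee_fin. Qed.

Lemma integral_mean (h : T -> R) (M : R) : measurable_fun setT h ->
  (forall x, 0 <= h x) -> (forall x, h x <= M) ->
  (\int[mu]_x (h x)%:E = (mean mu h)%:E)%E.
Proof.
move=> mh h_ge0 h_le.
have int_ge0 : (0 <= \int[mu]_x (h x)%:E)%E.
  by apply: integral_ge0 => x _; rewrite lee_fin.
have int_le : (\int[mu]_x (h x)%:E <= M%:E)%E.
  rewrite -[M%:E]mule1 -(probability_setT mu) -integral_cst //.
  apply: ge0_le_integral => //.
  - by move=> x _; rewrite lee_fin.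
  - exact/measurable_EFinP.
  - by move=> x _; rewrite lee_fin.
by rewrite fineK // ge0_fin_numE // (le_lt_trans int_le (ltry _)).
Qed.

Lemma integral_mean_pow (h : T -> R) (M : R) (n : nat) : measurable_fun setT h ->
  (forall x, 0 <= h x) -> (forall x, h x <= M) ->
  (\int[mu]_x (h x ^+ n)%:E = (mean mu (fun x => h x ^+ n))%:E)%E.
Proof.
move=> mh h_ge0 h_le.
have h_pow_le x : h x ^+ n <= M ^+ n.
  by apply: lerXn2r; rewrite ?nnegrE ?h_ge0 ?h_le ?(le_trans (h_ge0 x) (h_le x)).
exact: integral_mean (measurable_funX n mh) (fun x => exprn_ge0 n (h_ge0 x)) h_pow_le.
Qed.

End mean.

Lemma tv_ge0 d (S : measurableType d) (R : realType) (mu pi : probability S R) :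
  (0 <= tv mu pi)%E.
Proof.
have : (`|mu set0 - pi set0| <= tv mu pi)%E by apply: ereal_sup_ubound; exists set0.
by rewrite !measure0 subee // abse0.
Qed.

Lemma tv_le1 d (S : measurableType d) (R : realType) (mu pi : probability S R) :
  (tv mu pi <= 1)%E.
Proof.
apply: ge_ereal_sup => _ [A mA <-].
rewrite -(fineK (fin_num_measure mu _ mA)) -(fineK (fin_num_measure pi _ mA)).
rewrite -EFinB /= lee_fin ler_norml.
have mu01 : 0 <= fine (mu A) <= 1.
  by rewrite -2!lee_fin fineK ?fin_num_measure // measure_ge0 probability_le1.
have pi01 : 0 <= fine (pi A) <= 1.
  by rewrite -2!lee_fin fineK ?fin_num_measure // measure_ge0 probability_le1.
by apply/andP; split; lra.
Qed.

Lemma tv_fin_num d (S : measurableType d) (R : realType) (mu pi : probability S R) :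
  tv mu pi \is a fin_num.
Proof. by rewrite ge0_fin_numE ?tv_ge0 // (le_lt_trans (tv_le1 mu pi) (ltry _)). Qed.

Lemma sqr_norm2 (R : realType) (dy : nat) (v : 'rV[R]_dy) :
  norm2 v ^+ 2 = \sum_(i < dy) v ord0 i ^+ 2.
Proof. by rewrite sqr_sqrtr // sumr_ge0 // => i _; rewrite sqr_ge0. Qed.

Lemma measurable_sqr_norm2 d (S : measurableType d) (R : realType) (dy : nat)
  (f : S -> 'rV[R]_dy) :
  (forall i, measurable_fun setT (fun x => f x ord0 i)) ->
  measurable_fun setT (fun x => norm2 (f x) ^+ 2).
Proof.
move=> mf; rewrite (_ : (fun x => _) = fun x => \sum_(i < dy) f x ord0 i ^+ 2).
  by apply: measurable_sum => i; exact: measurable_funX.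
by apply: funext => x; rewrite sqr_norm2.
Qed.

Lemma ge0_integral_affine d (T : measurableType d) (R : realType)
  (mu : probability T R) (k0 k1 k2 : R) (u v : T -> R) :
  0 <= k0 -> 0 <= k1 -> 0 <= k2 ->
  measurable_fun setT u -> measurable_fun setT v ->
  (forall x, 0 <= u x) -> (forall x, 0 <= v x) ->
  (\int[mu]_x (k0 + k1 * u x + k2 * v x)%:E =
   k0%:E + k1%:E * \int[mu]_x (u x)%:E + k2%:E * \int[mu]_x (v x)%:E)%E.
Proof.
move=> k0_ge0 k1_ge0 k2_ge0 meas_u meas_v u_ge0 v_ge0.
have mEu : measurable_fun setT (fun x => (u x)%:E) by exact/measurable_EFinP.
have mEv : measurable_fun setT (fun x => (v x)%:E) by exact/measurable_EFinP.
under eq_integral do rewrite !EFinD !EFinM.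
rewrite ge0_integralD //; last 4 first.
- by move=> x _; rewrite -EFinM -EFinD lee_fin addr_ge0 ?mulr_ge0.
- by apply: emeasurable_funD => //; exact: emeasurable_funM.
- by move=> x _; rewrite -EFinM lee_fin mulr_ge0.
- exact: emeasurable_funM.
rewrite ge0_integralD //; last 2 first.
- by move=> x _; rewrite -EFinM lee_fin mulr_ge0.
- exact: emeasurable_funM.
rewrite integral_cst // [X in (k0%:E * X)%E]probability_setT mule1.
by rewrite !ge0_integralZl // => x _; rewrite lee_fin.
Qed.

(* [Radon_Nikodym_SigmaFinite.f] is a finite-valued version of the derivative
   [Radon_Nikodym] used in [chi2]; the two agree [pi]-almost everywhere. *)
Lemma abs_cont_density d (S : measurableType d) (R : realType)
  (mu pi : probability S R) : mu `<< pi ->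
  exists g : S -> R, [/\ measurable_fun setT g, (forall x, 0 <= g x),
   (forall phi : S -> \bar R, measurable_fun setT phi -> (forall x, 0 <= phi x)%E ->
      \int[pi]_x (phi x * (g x)%:E) = \int[mu]_x phi x)%E,
   (forall A, measurable A -> mu A = \int[pi]_(x in A) (g x)%:E)%E &
   chi2 mu pi = (\int[pi]_x ((g x - 1) ^+ 2)%:E)%E].
Proof.
move=> mu_pi.
pose g0 := Radon_Nikodym_SigmaFinite.f mu pi.
have g0E x : g0 x = (fine (g0 x))%:E.
  by rewrite fineK //; exact: Radon_Nikodym_SigmaFinite.f_fin_num.
have mg0 : measurable_fun setT g0.
  exact: measurable_int (Radon_Nikodym_SigmaFinite.f_integrable mu_pi).
exists (fine \o g0); split.
- exact: measurableT_comp.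
- by move=> x; rewrite /= -lee_fin -g0E; exact: Radon_Nikodym_SigmaFinite.f_ge0.
- move=> phi mphi phi_ge0.
  rewrite -(Radon_Nikodym_SigmaFinite.change_of_variables mu_pi phi_ge0 measurableT) //.
  by apply: eq_integral => x _ /=; rewrite -g0E.
- move=> A mA; rewrite (Radon_Nikodym_SigmaFinite.f_integral mu_pi mA).
  by apply: eq_integral => x _ /=; rewrite -g0E.
- rewrite /chi2 (@ae_eq_integral _ _ _ pi setT (fun x => (g0 x - 1%:E) ^+ 2)%E) //.
  + by apply: eq_integral => x _ /=; rewrite g0E -EFinB -EFinM expr2.
  + by apply: emeasurable_funM; exact: emeasurable_funD.
  + under eq_fun do rewrite expe2.
    by apply: emeasurable_funM; exact: emeasurable_funD.
  + apply: ae_eq_sym; move: (ae_eq_Radon_Nikodym_SigmaFinite mu_pi (@measurableT _ S)).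
    by apply: filterS => x g0x _; rewrite /g0 g0x.
Qed.

Section density.
Context d (S : measurableType d) (R : realType).
Variables (mu pi : probability S R) (g : S -> R).
Hypotheses (mg : measurable_fun setT g) (g_ge0 : forall x, 0 <= g x).
Hypothesis integral_density : forall phi : S -> \bar R, measurable_fun setT phi ->
  (forall x, 0 <= phi x)%E -> (\int[pi]_x (phi x * (g x)%:E) = \int[mu]_x phi x)%E.
Hypothesis measure_density :
  forall A, measurable A -> (mu A = \int[pi]_(x in A) (g x)%:E)%E.

Lemma integral_sqr_le_amgm (a : S -> R) (l1 l2 : R) :
  measurable_fun setT a -> (forall x, 0 <= a x) -> 0 < l1 -> 0 < l2 ->
  (\int[mu]_x (a x ^+ 2)%:E <= (l1^-1 / 2)%:E
     + ((l1 + l2) / 2)%:E * \int[pi]_x (a x ^+ 4)%:E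
     + (l2^-1 / 2)%:E * \int[pi]_x ((g x - 1) ^+ 2)%:E)%E.
Proof.
move=> ma a_ge0 l1_gt0 l2_gt0.
have ma2 : measurable_fun setT (fun x => a x ^+ 2) by exact: measurable_funX.
have ma4 : measurable_fun setT (fun x => a x ^+ 4) by exact: measurable_funX.
have mg1 : measurable_fun setT (fun x => (g x - 1) ^+ 2).
  by apply: measurable_funX; exact: measurable_funB.
rewrite -integral_density; first last.
- by move=> x; rewrite lee_fin exprn_ge0.
- exact/measurable_EFinP.
have [l1_ge0 l2_ge0] := (ltW l1_gt0, ltW l2_gt0).
rewrite -ge0_integral_affine ?divr_ge0 ?invr_ge0 ?addr_ge0 //; last 2 first.
- by move=> x; rewrite exprn_ge0.
- by move=> x; rewrite sqr_ge0.
apply: ge0_le_integral => //.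
- by move=> x _; rewrite -EFinM lee_fin mulr_ge0 ?exprn_ge0.
- by apply: emeasurable_funM => //; exact/measurable_EFinP.
- apply/measurable_EFinP; apply: measurable_funD => //.
  apply: measurable_funD => //; exact: measurable_funM.
  exact: measurable_funM.
move=> x _; rewrite -EFinM lee_fin.
have := mulr_le_amgm (a x ^+ 2) 1 l1_gt0.
have := mulr_le_amgm (a x ^+ 2) (g x - 1) l2_gt0.
rewrite -exprM /=; lra.
Qed.

Let deficit_set := g @^-1` `]-oo, 1[.

Let measurable_deficit_set : measurable deficit_set.
Proof. by rewrite -[deficit_set]setTI; exact: mg. Qed.

Lemma integral_deficit_le_tv :
  (\int[pi]_x (((fun x => (1 - g x)%:E) \_ deficit_set) x) <= tv mu pi)%E.
Proof.
have mg_deficit := measurable_funTS (D := deficit_set) mg.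
rewrite -integral_mkcond.
have pi_deficit_split : (\int[pi]_(x in deficit_set) (1 - g x)%:E + mu deficit_set
    = pi deficit_set)%E.
  rewrite measure_density // -ge0_integralD //; last 4 first.
  - by move=> x; rewrite /deficit_set /= in_itv /= lee_fin subr_ge0 => /ltW.
  - by apply/measurable_EFinP; exact: measurable_funB.
  - by move=> x _; rewrite lee_fin.
  - exact/measurable_EFinP.
  rewrite (eq_integral (fun _ => 1%E)); last by move=> x _; rewrite -EFinD subrK.
  by rewrite integral_cst // mul1e.
have -> : (\int[pi]_(x in deficit_set) (1 - g x)%:E = pi deficit_set - mu deficit_set)%E.
  by rewrite -pi_deficit_split addeK // fin_num_measure.
apply: le_trans (_ : `|mu deficit_set - pi deficit_set| <= _)%E.
  rewrite -(fineK (fin_num_measure mu _ measurable_deficit_set)).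
  rewrite -(fineK (fin_num_measure pi _ measurable_deficit_set)).
  by rewrite -!EFinB /= lee_fin -normrN opprB ler_norm.
by apply: ereal_sup_ubound; exists deficit_set.
Qed.

Lemma integral_le_add_tv (a : S -> R) (M : R) : measurable_fun setT a ->
  (forall x, 0 <= a x) -> (forall x, a x <= M) -> 0 <= M ->
  (\int[pi]_x (a x)%:E <= \int[mu]_x (a x)%:E + M%:E * tv mu pi)%E.
Proof.
move=> ma a_ge0 a_le M_ge0.
pose k := (fun x => (1 - g x)%:E) \_ deficit_set.
have k_ge0 x : (0 <= k x)%E.
  rewrite /k /patch; case: ifPn => // /set_mem.
  by rewrite /deficit_set /= in_itv /= lee_fin subr_ge0 => /ltW.
have mk : measurable_fun setT k.
  apply/(measurable_restrictT _ measurable_deficit_set)/measurable_EFinP.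
  by apply: measurable_funB => //; exact: measurable_funTS.
apply: (@le_trans _ _ (\int[pi]_x ((a x)%:E * (g x)%:E + M%:E * k x))%E).
  apply: ge0_le_integral => //.
  - by move=> x _; rewrite lee_fin.
  - exact/measurable_EFinP.
  - apply: emeasurable_funD => //; last exact: emeasurable_funM.
    by apply: emeasurable_funM; exact/measurable_EFinP.
  move=> x _; rewrite /k /patch; case: ifPn => [/set_mem|x_notin].
    rewrite /deficit_set /= in_itv /= => gx_lt1.
    rewrite -!EFinM -EFinD lee_fin.
    have : a x * (1 - g x) <= M * (1 - g x) by rewrite ler_wpM2r // subr_ge0 ltW.
    lra.
  have gx_ge1 : 1 <= g x.
    rewrite leNgt; apply: contra x_notin => gx_lt1.
    by apply/mem_set; rewrite /deficit_set /= in_itv.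
  by rewrite mule0 adde0 -EFinM lee_fin ler_peMr.
rewrite ge0_integralD //; last 4 first.
- by move=> x _; rewrite -EFinM lee_fin mulr_ge0.
- by apply: emeasurable_funM; exact/measurable_EFinP.
- by move=> x _; rewrite mule_ge0.
- exact: emeasurable_funM.
rewrite integral_density //; last exact/measurable_EFinP.
rewrite ge0_integralZl ?lee_fin //.
by rewrite leeD2l // lee_wpmul2l ?lee_fin //; exact: integral_deficit_le_tv.
Qed.

End density.

Section abs_cont.
Context d (S : measurableType d) (R : realType).
Variables (mu pi : probability S R) (a : S -> R) (M : R).
Hypotheses (mu_pi : mu `<< pi) (ma : measurable_fun setT a).
Hypotheses (a_ge0 : forall x, 0 <= a x) (a_le : forall x, a x <= M) (M_ge0 : 0 <= M).

Lemma mean_sqr_le_chi2 (c K : R) : 0 < c -> (chi2 mu pi <= c%:E)%E -> 0 <= K ->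
  mean pi (fun x => a x ^+ 4) <= K ^+ 2 ->
  mean mu (fun x => a x ^+ 2) <= (1 + Num.sqrt c) * K.
Proof.
move=> c_gt0 chi2_le K_ge0 a4_le.
have [g [mg g_ge0 int_g _ chi2E]] := abs_cont_density mu_pi.
apply: le_amgm_family_inf c_gt0 K_ge0 a4_le _ => l1 l2 l1_gt0 l2_gt0.
rewrite -lee_fin -(integral_mean_pow _ _ ma a_ge0 a_le).
apply: le_trans (integral_sqr_le_amgm mg g_ge0 int_g ma a_ge0 l1_gt0 l2_gt0) _.
rewrite -chi2E (integral_mean_pow _ _ ma a_ge0 a_le) -EFinM -[X in (X + _ <= _)%E]EFinD [leRHS]EFinD.
apply: leeD2l; rewrite [leRHS]EFinM lee_wpmul2l //.
by rewrite lee_fin divr_ge0 // invr_ge0 ltW.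
Qed.

Lemma mean_le_add_tv : mean pi a <= mean mu a + M * fine (tv mu pi).
Proof.
have [g [mg g_ge0 int_g meas_g _]] := abs_cont_density mu_pi.
have := integral_le_add_tv mg g_ge0 int_g meas_g ma a_ge0 a_le M_ge0.
by rewrite !(integral_mean _ ma a_ge0 a_le) -(fineK (tv_fin_num mu pi)) -EFinM -EFinD lee_fin.
Qed.

End abs_cont.

Definition tavg (R : numFieldType) (T : nat) (u : nat -> R) : R :=
  T%:R^-1 * \sum_(t < T) u t.

Section time_average.
Context (R : numFieldType) (T : nat).
Implicit Types (u v : nat -> R).

Lemma tavg0 u : tavg 0 u = 0.
Proof. by rewrite /tavg big_ord0 mulr0. Qed.

Lemma tavg_cst (c : R) : (0 < T)%N -> tavg T (fun=> c) = c.
Proof.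
by move=> T_gt0; rewrite /tavg sumr_const card_ord -[c *+ T]mulr_natl mulKf // pnatr_eq0 -lt0n.
Qed.

Lemma tavgD u v : tavg T (fun t => u t + v t) = tavg T u + tavg T v.
Proof. by rewrite /tavg big_split mulrDr. Qed.

Lemma tavgZ (k : R) u : tavg T (fun t => k * u t) = k * tavg T u.
Proof. by rewrite /tavg -mulr_sumr mulrCA. Qed.

Lemma ler_tavg u v : (forall t, u t <= v t) -> tavg T u <= tavg T v.
Proof. by move=> uv; rewrite ler_wpM2l ?invr_ge0 // ler_sum. Qed.

Lemma tavg_ge0 u : (forall t, 0 <= u t) -> 0 <= tavg T u.
Proof. by move=> u_ge0; rewrite mulr_ge0 ?invr_ge0 // sumr_ge0. Qed.

End time_average.

Lemma tavg_mean_sqr_le d (S : measurableType d) (R : realType)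
  (mu : nat -> probability S R) (pi : probability S R) (a : S -> R) (T : nat)
  (M r c CTV C82 : R) :
  measurable_fun setT a -> (forall x, 0 <= a x) -> (forall x, a x <= M) -> 0 <= M ->
  0 < r -> 0 < c -> 0 <= C82 ->
  (forall t, mu t `<< pi) -> (forall t, (chi2 (mu t) pi <= c%:E)%E) ->
  tavg T (fun t => fine (tv (mu t) pi)) <= CTV * r ^+ 2 ->
  mean pi (fun x => a x ^+ 4) <= C82 * mean pi a ^+ 4 ->
  tavg T (fun t => mean (mu t) a) = r ^+ 2 ->
  tavg T (fun t => mean (mu t) (fun x => a x ^+ 2))
    <= (1 + Num.sqrt c) * Num.sqrt C82 * (1 + CTV * M) ^+ 2 * (r ^+ 2) ^+ 2.
Proof.
move=> ma a_ge0 a_le M_ge0 r_gt0 c_gt0 C82_ge0 mu_pi chi2_le tv_le a4_le mean_a.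
have T_gt0 : (0 < T)%N.
  rewrite lt0n; apply/eqP => T0; move: mean_a; rewrite T0 tavg0 => /eqP.
  by rewrite eq_sym sqrf_eq0 gt_eqF.
set p1 := mean pi a.
have p1_ge0 : 0 <= p1 := mean_ge0 pi a_ge0.
have p1_le : p1 <= (1 + CTV * M) * r ^+ 2.
  rewrite -(tavg_cst p1 T_gt0).
  apply: le_trans (ler_tavg T (fun t => mean_le_add_tv (mu_pi t) ma a_ge0 a_le M_ge0)) _.
  rewrite tavgD tavgZ mean_a.
  have : M * tavg T (fun t => fine (tv (mu t) pi)) <= M * (CTV * r ^+ 2) by rewrite ler_wpM2l.
  lra.
have K_ge0 : 0 <= Num.sqrt C82 * p1 ^+ 2 by rewrite mulr_ge0 ?sqrtr_ge0 ?sqr_ge0.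
have a4_le' : mean pi (fun x => a x ^+ 4) <= (Num.sqrt C82 * p1 ^+ 2) ^+ 2.
  by rewrite exprMn sqr_sqrtr // -exprM.
apply: le_trans (ler_tavg T (fun t =>
  mean_sqr_le_chi2 (mu_pi t) ma a_ge0 a_le c_gt0 (chi2_le t) K_ge0 a4_le')) _.
rewrite tavg_cst // mulrA -[X in _ <= X]mulrA -exprMn ler_wpM2l ?mulr_ge0 ?sqrtr_ge0 ?addr_ge0 //.
by apply: lerXn2r; rewrite ?nnegrE // (le_trans p1_ge0 p1_le).
Qed.

Lemma tavg_fine (R : realType) (T : nat) (u : nat -> \bar R) :
  (forall t, u t \is a fin_num) ->
  ((T%:R^-1)%:E * \sum_(t < T) u t = (tavg T (fun t => fine (u t)))%:E)%E.
Proof. by move=> u_fin; rewrite EFinM -sumEFin; under [in RHS]eq_bigr do rewrite fineK //. Qed.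

Section trajectory.
Context dO dS (Omega : measurableType dO) (S : measurableType dS) (R : realType).
Variables (P : probability Omega R) (X : nat -> {mfun Omega >-> S}) (T : nat).
Variables (phi : S -> R) (M : R).
Hypotheses (mphi : measurable_fun setT phi)
  (phi_ge0 : forall y, 0 <= phi y) (phi_le : forall y, phi y <= M).

Let integral_comp t :
  (\int[P]_w (phi (X t w))%:E = (mean (distribution P (X t)) phi)%:E)%E.
Proof.
rewrite -(integral_mean _ mphi phi_ge0 phi_le) ge0_integral_distribution //.
exact/measurable_EFinP.
Qed.

Lemma tavg_integral_comp :
  ((T%:R^-1)%:E * \sum_(t < T) \int[P]_w (phi (X t w))%:E
   = (tavg T (fun t => mean (distribution P (X t)) phi))%:E)%E.
Proof. by under eq_bigr do rewrite integral_comp; rewrite sumEFin -EFinM. Qed.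

Lemma integral_tavg_comp :
  (\int[P]_w (tavg T (fun t => phi (X t w)))%:E
   = (tavg T (fun t => mean (distribution P (X t)) phi))%:E)%E.
Proof.
have mphiX t : measurable_fun setT (fun w => (phi (X t w))%:E).
  by apply/measurable_EFinP; exact: measurableT_comp.
rewrite -tavg_integral_comp -ge0_integral_sum //; last by move=> t w _; rewrite lee_fin.
rewrite -ge0_integralZl ?lee_fin ?invr_ge0 //; last 2 first.
- exact: emeasurable_sum.
- by move=> w _; rewrite sume_ge0 // => t _; rewrite lee_fin.
by apply: eq_integral => w _; rewrite /tavg EFinM sumEFin.
Qed.

End trajectory.

Unset Implicit Arguments.
Theorem proposition4 (R : realType) (dO dS : measure_display)
  (Omega : measurableType dO) (S : measurableType dS) (dy : nat)
  (P : probability Omega R) (X : nat -> {mfun Omega >-> S}) (T : nat)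
  (pi : probability S R) (F : set (S -> 'rV[R]_dy))
  (r Cchi2 CTV C82 B : R)
  (hr : 0 < r) (hCchi2 : 0 < Cchi2) (hCTV : 0 < CTV) (hC82 : 0 < C82) (hB : 0 < B)
  (Fmeas : forall f, F f -> forall i : 'I_dy, measurable_fun setT (fun x => f x ord0 i))
  (Fbdd : forall f, F f -> forall x, norm2 (f x) <= B)
  (abscont : forall t, distribution P (X t) `<< pi)
  (hchi2 : forall t, (chi2 (distribution P (X t)) pi <= Cchi2%:E)%E)
  (htv : ((T%:R^-1)%:E * \sum_(t < T) tv (distribution P (X t)) pi <= (CTV * r ^+ 2)%:E)%E)
  (h82 : forall f, F f ->
     (\int[pi]_x (norm2 (f x) ^+ 8)%:E
      <= C82%:E * (\int[pi]_x (norm2 (f x) ^+ 2)%:E) ^+ 4)%E) :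
  traj_hypercontractive (sphere P (fun t => X t) T F r) P (fun t => X t) T
    ((1 + Num.sqrt Cchi2) * Num.sqrt C82 * (1 + CTV * B ^+ 2) ^+ 2) 2.
Proof.
move=> f [Ff L2f].
pose a x := norm2 (f x) ^+ 2.
have ma : measurable_fun setT a := measurable_sqr_norm2 (Fmeas f Ff).
have a_ge0 x : 0 <= a x := sqr_ge0 _.
have a_le x : a x <= B ^+ 2.
  by apply: lerXn2r; rewrite ?nnegrE ?sqrtr_ge0 ?Fbdd ?ltW.
have mean_a : tavg T (fun t => mean (distribution P (X t)) a) = r ^+ 2.
  move: L2f; rewrite /L2norm /L2sq (tavg_integral_comp P X T ma a_ge0 a_le) /= => <-.
  by rewrite sqr_sqrtr // tavg_ge0 // => t; exact: mean_ge0.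
have a4_le : mean pi (fun x => a x ^+ 4) <= C82 * mean pi a ^+ 4.
  have a_pow4 x : norm2 (f x) ^+ 8 = a x ^+ 4 by rewrite -exprM.
  have := h82 f Ff; under eq_integral do rewrite a_pow4.
  rewrite (integral_mean_pow _ _ ma a_ge0 a_le) (integral_mean _ ma a_ge0 a_le).
  by rewrite -EFin_expe -EFinM lee_fin.
have tv_le : tavg T (fun t => fine (tv (distribution P (X t)) pi)) <= CTV * r ^+ 2.
  by move: htv; rewrite (tavg_fine T (fun t => tv_fin_num (distribution P (X t)) pi)) lee_fin.
rewrite /traj_hypercontractive.
have a_sqr x : norm2 (f x) ^+ 4 = a x ^+ 2 by rewrite -exprM.
under eq_integral do under eq_bigr do rewrite a_sqr.
have a2_le x : a x ^+ 2 <= (B ^+ 2) ^+ 2 by apply: lerXn2r; rewrite ?nnegrE ?a_ge0 ?a_le ?sqr_ge0.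
rewrite (integral_tavg_comp P X T (measurable_funX 2 ma) (fun x => sqr_ge0 _) a2_le).
rewrite (integral_tavg_comp P X T ma a_ge0 a_le) mean_a poweR_EFin.
rewrite powR_mulrn ?sqr_ge0 // -EFinM lee_fin.
apply: tavg_mean_sqr_le ma a_ge0 a_le _ hr hCchi2 (ltW hC82) abscont hchi2 tv_le a4_le mean_a.
by rewrite sqr_ge0.
Qed.
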